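(* Let $q$ be a prime power with $q-1=em$ for positive integers $e,m$, and let $\sigma\in\mathbb{F}_q$. For each $i=0,\dots,e-1$ let $A_i,B_i$ be $0$-$1$ matrices with rows and columns indexed by $\mathbb{F}_q$, each of whose row indexed by $0$ has a $1$ exactly in the columns indexed by elements of $D_0^e$. Assume that for each $i$ the product $A_iB_i$ is $\sigma$-circulant and $B_i$ is $\sigma_i$-circulant for some $\sigma_i\in D_i^e$. Let $C$ be the $\sigma$-circulant matrix whose row indexed by $0$ has a $1$ exactly in the columns indexed by elements of $D_0^e$. Then $\sum_{i=0}^{e-1}A_iB_i+C=mJ$, where $J$ is the $q\times q$ all-ones matrix.
   Context: For a primitive element $\gamma$ of $\mathbb{F}_q$ and $e\mid q-1$, the cyclotomic classes are $D_i^e=\gamma^i\langle\gamma^e\rangle$, $i=0,\dots,e-1$. For $\tau\in\mathbb{F}_q$, a matrix $N$ with rows and columns indexed by $\mathbb{F}_q$ is $\tau$-circulant if $N_{x,y}=N_{x-k,\,y-\tau k}$ for all $x,y,k\in\mathbb{F}_q$. *)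

From HB Require Import structures.
From mathcomp Require Import all_boot all_order all_algebra all_field.
Set Implicit Arguments. Unset Strict Implicit. Unset Printing Implicit Defensive.
Import GRing.Theory.
Local Open Scope ring_scope.

Definition fmat (F : finFieldType) := F -> F -> nat.

Definition fmul (F : finFieldType) (A B : fmat F) : fmat F :=
  fun x y => (\sum_(z : F) A x z * B z y)%N.

Definition zero_one (F : finFieldType) (A : fmat F) : Prop :=
  forall x y, (A x y <= 1)%N.

Definition circulant (F : finFieldType) (tau : F) (N : fmat F) : Prop :=
  forall x y k : F, N x y = N (x - k) (y - tau * k).

Definition cyclo_class (F : finFieldType) (gamma : F) (e i : nat) : {set F} :=
  [set gamma ^+ (i + e * k)%N | k : 'I_#|F|].

Definition row0_is (F : finFieldType) (N : fmat F) (D : {set F}) : Prop :=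
  forall y : F, N 0 y = nat_of_bool (y \in D).

From HB Require Import structures.
From mathcomp Require Import all_boot all_order all_algebra all_field.
Local Open Scope ring_scope.
Import GRing.Theory.
Set Implicit Arguments. Unset Strict Implicit.

(* Circulancy moves every entry to row 0: (A_i B_i)_{x,y} = (A_i B_i)_{0,w} with
   w = y - sigma x, and the row-0 data of A_i and B_i give
   (A_i B_i)_{0,w} = #{u in D_i | w - u in D_0}, using sigma_i D_0 = D_i.
   As the classes D_i partition F^*, adding C_{x,y} = [w in D_0] to the sum
   over i counts all u in F with w - u in D_0, i.e. |D_0| = m. *)

Section FiniteFieldMatrices.

Variable F : finFieldType.

Lemma expf_card_pred (u : F) : u != 0 -> u ^+ #|F|.-1 = 1.
Proof.
move=> u_nz; apply: (mulfI u_nz); rewrite mulr1 -exprS prednK ?expf_card //.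
exact: ltnW (finNzRing_gt1 F).
Qed.

Lemma sum_subr_mem (D : {set F}) w : (\sum_u ((w - u)%R \in D) = #|D|)%N.
Proof.
rewrite (reindex_inj (inv_inj (subKr w))) -sum1_card [RHS]big_mkcond.
by apply: eq_bigr => u _; rewrite subKr; case: (u \in D).
Qed.

Lemma circulant_row0 (tau : F) (N : fmat F) x y :
  circulant tau N -> N x y = N 0 (y - tau * x).
Proof. by move=> cN; rewrite (cN x y x) subrr. Qed.

Lemma fmul_row0 (s : F) (D : {set F}) (A B : fmat F) w :
  row0_is A D -> row0_is B D -> circulant s B ->
  fmul A B 0 w = (\sum_(z in D) ((w - s * z)%R \in D))%N.
Proof.
move=> rA rB cB; rewrite /fmul [RHS]big_mkcond /=; apply: eq_bigr => z _.
by rewrite rA (circulant_row0 _ _ cB) rB; case: (z \in D); rewrite ?mul1n.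
Qed.

End FiniteFieldMatrices.

Section CyclotomicClasses.

Variables (F : finFieldType) (gamma : F) (e m : nat).
Hypotheses (e_gt0 : (0 < e)%N) (card_pred : (#|F|.-1 = e * m)%N).
Hypothesis gamma_prim : (#|F|.-1).-primitive_root gamma.

Local Notation D := (cyclo_class gamma e).

Lemma gamma_neq0 : gamma != 0.
Proof.
apply/eqP => gamma0; move: (prim_expr_order gamma_prim).
rewrite gamma0 expr0n eqn0Ngt (prim_order_gt0 gamma_prim) => /eqP.
by rewrite eq_sym oner_eq0.
Qed.

Lemma cyclo_class_neq0 i u : u \in D i -> u != 0.
Proof. by case/imsetP=> k _ ->; rewrite expf_neq0 // gamma_neq0. Qed.

Lemma mem_cyclo_classX i j :
  (i < e)%N -> (gamma ^+ j \in D i) = (j == i %[mod e]).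
Proof.
move=> lt_ie; apply/imsetP/idP => [[k _ /eqP]|/eqP j_mod].
  rewrite (eq_prim_root_expr gamma_prim) card_pred => /eqP/(congr1 (modn^~ e)).
  rewrite !modn_dvdm ?dvdn_mulr // => ->.
  by rewrite addnC mulnC modnMDl modn_small.
have m_gt0 : (0 < m)%N.
  by rewrite lt0n; apply: contraTneq (finNzRing_gt1 F) => m0;
     rewrite -(prednK (ltnW (finNzRing_gt1 F))) card_pred m0 muln0.
have lt_k : ((j %/ e) %% m < #|F|)%N.
  apply: leq_trans (ltn_pmod _ m_gt0) _; apply: leq_trans (leq_pred _).
  by rewrite card_pred leq_pmull.
exists (Ordinal lt_k) => //=; apply/eqP.
rewrite (eq_prim_root_expr gamma_prim) card_pred -modnDm muln_modr modn_mod.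
by rewrite modnDm -(modn_small lt_ie) -j_mod addnC (mulnC e (j %/ e)%N) -divn_eq.
Qed.

Lemma prim_root_exp_of_neq0 (u : F) : u != 0 -> exists j, u = gamma ^+ j.
Proof.
by move=> u_nz; have [j ->] := prim_rootP gamma_prim (expf_card_pred u_nz); exists j.
Qed.

Lemma mem_cyclo_classM i s z :
  (i < e)%N -> s \in D i -> (s * z \in D i) = (z \in D 0).
Proof.
move=> lt_ie Dis; have [b s_def] := prim_root_exp_of_neq0 (cyclo_class_neq0 Dis).
have [-> | z_nz] := eqVneq z 0.
  by rewrite mulr0; apply/idP/idP => /cyclo_class_neq0; rewrite eqxx.
have [a ->] := prim_root_exp_of_neq0 z_nz.
move: Dis; rewrite s_def -exprD !mem_cyclo_classX // => /eqP b_mod.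
by rewrite -b_mod -{2}[b]add0n addnC eqn_modDr.
Qed.

Lemma sum_cyclo_classM i s (f : F -> nat) :
  (i < e)%N -> s \in D i ->
  (\sum_(z in D 0) f (s * z)%R = \sum_(u in D i) f u)%N.
Proof.
move=> lt_ie Dis; rewrite [RHS](reindex_inj (mulfI (cyclo_class_neq0 Dis))).
by apply: eq_bigl => z; rewrite /= mem_cyclo_classM.
Qed.

Lemma sum_cyclo_classes (f : F -> nat) :
  (\sum_(i < e) \sum_(u in D i) f u = \sum_(u | u != 0%R) f u)%N.
Proof.
rewrite (exchange_big_dep predT) //= [RHS]big_mkcond; apply: eq_bigr => u _.
have [-> | u_nz] := eqVneq u 0.
  by rewrite big_pred0 // => i; apply/negP => /cyclo_class_neq0; rewrite eqxx.
have [j ->] := prim_root_exp_of_neq0 u_nz; pose j0 := Ordinal (ltn_pmod j e_gt0).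
rewrite (big_pred1 j0) // => i.
by rewrite /= mem_cyclo_classX // (modn_small (ltn_ord i)) -val_eqE eq_sym.
Qed.

Lemma cyclo_classE i : D i = [set gamma ^+ i * u | u in D 0].
Proof.
by rewrite -imset_comp; apply: eq_imset => k /=; rewrite add0n exprD.
Qed.

Lemma card_cyclo_class0 : #|D 0| = m.
Proof.
have card_D i : #|D i| = #|D 0|.
  by rewrite cyclo_classE card_imset //; apply: mulfI; rewrite expf_neq0 ?gamma_neq0.
move: (sum_cyclo_classes (fun=> 1%N)) => /=.
under eq_bigr => i _ do rewrite sum1_card card_D.
rewrite sum_nat_const card_ord sum1_card cardC1 card_pred => /eqP.
by rewrite eqn_pmul2l // => /eqP.
Qed.

End CyclotomicClasses.

Unset Implicit Arguments. Set Strict Implicit.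

Theorem mainTheorem7 (F : finFieldType) (e m : nat) (gamma sigma : F)
  (A B : 'I_e -> fmat F) (C : fmat F) :
  (0 < e)%N -> (0 < m)%N -> (#|F|.-1 = e * m)%N ->
  (#|F|.-1).-primitive_root gamma ->
  (forall i, zero_one (A i) /\ zero_one (B i)) ->
  (forall i, row0_is (A i) (cyclo_class gamma e 0) /\
             row0_is (B i) (cyclo_class gamma e 0)) ->
  (forall i, circulant sigma (fmul (A i) (B i))) ->
  (forall i : 'I_e, exists2 si : F, si \in cyclo_class gamma e i & circulant si (B i)) ->
  circulant sigma C -> row0_is C (cyclo_class gamma e 0) ->
  forall x y : F, ((\sum_(i < e) fmul (A i) (B i) x y) + C x y)%N = m.
Proof.
move=> e_gt0 _ card_pred gamma_prim _ row0_AB circ_AB circ_B circ_C row0_C x y.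
set D0 := cyclo_class gamma e 0; set w := y - sigma * x.
have AB_xy (i : 'I_e) :
    fmul (A i) (B i) x y = (\sum_(u in cyclo_class gamma e i) ((w - u)%R \in D0))%N.
  have [s Dis circ_Bi] := circ_B i; have [row0_Ai row0_Bi] := row0_AB i.
  rewrite (circulant_row0 _ _ (circ_AB i)) (fmul_row0 _ row0_Ai row0_Bi circ_Bi).
  exact: (sum_cyclo_classM e_gt0 card_pred gamma_prim (fun u => w - u \in D0)).
rewrite (eq_bigr _ (fun i _ => AB_xy i)) (sum_cyclo_classes e_gt0 card_pred gamma_prim).
rewrite (circulant_row0 _ _ circ_C) row0_C -/w -/D0.
rewrite -(card_cyclo_class0 e_gt0 card_pred gamma_prim) -(sum_subr_mem _ w).
rewrite [RHS](bigD1 0) //= subr0 addnC.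
by congr (_ + _)%N; apply: eq_bigl.
Qed.
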